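(* Let $\mathcal{A}\in\mathbb{C}^{I_{1\ldots N}\times I_{1\ldots N}}$, and let $\mathcal{M},\mathcal{N}\in\mathbb{C}^{I_{1\ldots N}\times I_{1\ldots N}}$ be Hermitian positive definite tensors. Then (i) $0\in\sigma(\mathcal{A})$ if and only if $0\in\sigma(\mathcal{A}^{\dagger}_{\mathcal{M},\mathcal{N}})$; (ii) $0\in W(\mathcal{A})$ if and only if $0\in W(\mathcal{A}^{\dagger}_{\mathcal{M},\mathcal{N}})$.
   Context: Write $I_{1\ldots N}$ for $I_1\times\cdots\times I_N$. Einstein product: $(\mathcal{A}*_N\mathcal{B})_{i_1\ldots i_Nj_1\ldots j_L}=\sum_{k_1,\ldots,k_N}a_{i_1\ldots i_Nk_1\ldots k_N}b_{k_1\ldots k_Nj_1\ldots j_L}$ (also when $\mathcal{B}\in\mathbb{C}^{I_{1\ldots N}}$). $\mathcal{A}^H$ is the conjugate transpose. For $\mathcal{X},\mathcal{Y}\in\mathbb{C}^{I_{1\ldots N}}$, $\langle\mathcal{X},\mathcal{Y}\rangle=\mathcal{Y}^H*_N\mathcal{X}$, $\|\mathcal{X}\|=\langle\mathcal{X},\mathcal{X}\rangle^{1/2}$. $\mathcal{M}$ is Hermitian positive definite if $\mathcal{M}^H=\mathcal{M}$ and $\langle\mathcal{M}*_N\mathcal{X},\mathcal{X}\rangle>0$ for nonzero $\mathcal{X}$. $\sigma(\mathcal{A})$ is the set of $\lambda\in\mathbb{C}$ with $\mathcal{A}*_N\mathcal{X}=\lambda\mathcal{X}$ for some nonzero $\mathcal{X}\in\mathbb{C}^{I_{1\ldots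 N}}$. Numerical range: $W(\mathcal{A})=\{\langle\mathcal{A}*_N\mathcal{X},\mathcal{X}\rangle:\mathcal{X}\in\mathbb{C}^{I_{1\ldots N}},\ \|\mathcal{X}\|=1\}$. Weighted Moore-Penrose inverse $\mathcal{A}^{\dagger}_{\mathcal{M},\mathcal{N}}$: the unique $\mathcal{X}$ with $\mathcal{A}*_N\mathcal{X}*_N\mathcal{A}=\mathcal{A}$, $\mathcal{X}*_N\mathcal{A}*_N\mathcal{X}=\mathcal{X}$, $(\mathcal{M}*_N\mathcal{A}*_N\mathcal{X})^H=\mathcal{M}*_N\mathcal{A}*_N\mathcal{X}$, $(\mathcal{N}*_N\mathcal{X}*_N\mathcal{A})^H=\mathcal{N}*_N\mathcal{X}*_N\mathcal{A}$. *)

(* complex numbers are R[i] = complex R over a real closed field R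
   (in the statement R : realType, so R[i] is the field of complex numbers). *)
From HB Require Import structures.
From mathcomp Require Import all_boot all_order all_algebra.
From mathcomp Require Import complex.
Set Implicit Arguments. Unset Strict Implicit. Unset Printing Implicit Defensive.
Import Order.TTheory GRing.Theory Num.Theory.
Local Open Scope ring_scope.

(* Multi-index (i_1,...,i_N) with 1 <= i_k <= I_k (0-based here): the finite
   type I_1 x ... x I_N, given the dimension vector I : 'I_N -> nat. *)
Definition idx (N : nat) (I : 'I_N -> nat) : finType :=
  {dffun forall k : 'I_N, 'I_(I k)}.

Section Tensors.
Variables (C : numClosedFieldType) (N : nat) (I : 'I_N -> nat).

Definition tvec := idx I -> C.
Definition tmat := idx I -> idx I -> C.

Definition ein (A B : tmat) : tmat :=
  fun i j => \sum_(k : idx I) A i k * B k j.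
Definition einv (A : tmat) (X : tvec) : tvec :=
  fun i => \sum_(k : idx I) A i k * X k.
Definition tH (A : tmat) : tmat := fun i j => (A j i)^*.
Definition tinner (X Y : tvec) : C := \sum_(i : idx I) (Y i)^* * X i.
Definition tnorm (X : tvec) : C := sqrtC (tinner X X).
Definition tnonzero (X : tvec) : Prop := exists i, X i != 0.

Definition hpd (M : tmat) : Prop :=
  tH M = M /\ forall X : tvec, tnonzero X -> 0 < tinner (einv M X) X.

Definition tspec (A : tmat) (lam : C) : Prop :=
  exists X : tvec, tnonzero X /\ einv A X = (fun i => lam * X i).

Definition tnumrange (A : tmat) (z : C) : Prop :=
  exists X : tvec, tnorm X = 1 /\ tinner (einv A X) X = z.

Definition is_wmpinv (M Nw A X : tmat) : Prop :=
  [/\ ein (ein A X) A = A,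
      ein (ein X A) X = X,
      tH (ein M (ein A X)) = ein M (ein A X)
    & tH (ein Nw (ein X A)) = ein Nw (ein X A)].

End Tensors.

(* Only the first two Penrose equations A X A = A and X A X = X matter.  They
   force A and X to be invertible together, and X A = 1 when A is invertible.
   If A is singular, so is X, and a null vector v of X gives <X v, v> = 0.  If
   A is invertible and <A x, x> = 0 with x <> 0, then y := A x is nonzero and
   <X y, y> = <x, A x> is the conjugate of <A x, x>, hence 0.  The two
   equations are symmetric in A and X, which gives both directions. *)
From HB Require Import structures.
From mathcomp Require Import all_boot all_order all_algebra.
From mathcomp Require Import complex.
From mathcomp Require Import reals.
From Stdlib Require Import FunctionalExtensionality.
Set Implicit Arguments. Unset Strict Implicit.
Import Order.TTheory GRing.Theory Num.Theory.
Local Open Scope ring_scope.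

Lemma unitmxPn (F : fieldType) (n : nat) (B : 'M[F]_n) :
  reflect (exists2 c : 'cV_n, B *m c = 0 & c != 0) (B \notin unitmx).
Proof.
rewrite -unitmx_tr -row_free_unit -kermx_eq0.
apply: (iffP idP) => [/rowV0Pn [u /sub_kermxP uB0 u_neq0] | [c Bc0 c_neq0]].
  exists u^T; last by rewrite trmx_eq0.
  by rewrite -[B]trmxK -trmx_mul uB0 trmx0.
apply: contraNN c_neq0; rewrite kermx_eq0 => B_free.
by rewrite -trmx_eq0 -(mulmx_free_eq0 _ B_free) -trmx_mul Bc0 trmx0.
Qed.

Section Tensors.
Variables (C : numClosedFieldType) (N : nat) (I : 'I_N -> nat).
Local Notation T := (idx I).
Local Notation n := #|{: T}|.
Implicit Types (A B X : tmat C I) (u v x : tvec C I).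

Definition mx A : 'M[C]_n := \matrix_(i, j) A (enum_val i) (enum_val j).
Definition cv v : 'cV[C]_n := \col_i v (enum_val i).
Definition vc (c : 'cV[C]_n) : tvec C I := fun t => c (enum_rank t) 0.

Lemma cvK : cancel cv vc.
Proof.
by move=> v; apply: functional_extensionality => t; rewrite /vc mxE enum_rankK.
Qed.

Lemma vcK : cancel vc cv.
Proof. by move=> c; apply/matrixP => i j; rewrite mxE /vc enum_valK ord1. Qed.

Lemma cv_inj : injective cv.
Proof. exact: can_inj cvK. Qed.

Lemma cv0 : cv (fun _ => 0) = 0.
Proof. by apply/matrixP => i j; rewrite !mxE. Qed.

Lemma cv_eq0 v : cv v = 0 -> v = (fun _ => 0).
Proof. by move=> /(congr1 vc); rewrite cvK -cv0 cvK. Qed.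

Lemma mul0_tvec v : (fun t => 0 * v t) = (fun _ : T => 0).
Proof. by apply: functional_extensionality => t; rewrite mul0r. Qed.

Lemma tnonzero_cv v : tnonzero v <-> cv v != 0.
Proof.
split=> [[t vt_neq0] | cv_neq0].
  by apply: contraNneq vt_neq0 => /cv_eq0 ->.
case: (pickP (fun t => v t != 0)) => [t vt_neq0 | v_zero]; first by exists t.
suff v0 : v = (fun _ => 0) by move: cv_neq0; rewrite v0 cv0 eqxx.
by apply: functional_extensionality => t; apply/eqP/negbFE/v_zero.
Qed.

Lemma sum_enum_val (F : T -> C) : \sum_(t : T) F t = \sum_(k < n) F (enum_val k).
Proof. by rewrite -big_enum_val; apply: eq_bigl => t; rewrite inE. Qed.

Lemma mx_ein A B : mx (ein A B) = mx A *m mx B.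
Proof.
apply/matrixP => i j; rewrite !mxE /ein sum_enum_val.
by apply: eq_bigr => k _; rewrite !mxE.
Qed.

Lemma cv_einv A v : cv (einv A v) = mx A *m cv v.
Proof.
apply/matrixP => i j; rewrite !mxE /einv sum_enum_val.
by apply: eq_bigr => k _; rewrite !mxE.
Qed.

Lemma tinnerC u v : tinner u v = (tinner v u)^*.
Proof.
rewrite /tinner rmorph_sum; apply: eq_bigr => i _.
by rewrite rmorphM /= conjCK mulrC.
Qed.

Lemma tinner_gt0 v : tnonzero v -> 0 < tinner v v.
Proof.
move=> [t vt_neq0]; rewrite /tinner (bigD1 t) //= ltr_wpDr //.
  by apply: sumr_ge0 => s _; rewrite mulrC mul_conjC_ge0.
by rewrite mulrC mul_conjC_gt0.
Qed.

Lemma tinnerZ (a : C) u v :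
  tinner (fun t => a * u t) (fun t => a * v t) = a * a^* * tinner u v.
Proof.
rewrite /tinner mulr_sumr; apply: eq_bigr => t _.
by rewrite rmorphM /= mulrACA [a^* * a]mulrC.
Qed.

Lemma einvZ (a : C) A v : einv A (fun t => a * v t) = (fun t => a * einv A v t).
Proof.
apply: functional_extensionality => t; rewrite /einv mulr_sumr.
by apply: eq_bigr => s _; rewrite mulrCA.
Qed.

Lemma tnumrange0P A :
  tnumrange A 0 <-> exists2 v, tnonzero v & tinner (einv A v) v = 0.
Proof.
split=> [[v [v_unit Av_v]] | [v v_neq0 Av_v]].
  exists v => //; apply/tnonzero_cv/negP => /eqP/cv_eq0 v0.
  move: v_unit; rewrite v0 /tnorm /tinner big1 ?sqrtC0 => [/eqP | t _].
    by rewrite eq_sym oner_eq0.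
  by rewrite mulr0.
pose a := (sqrtC (tinner v v))^-1.
have a_conj : a^* = a.
  by rewrite geC0_conj // invr_ge0 sqrtC_ge0 ltW // tinner_gt0.
exists (fun t => a * v t); split; last by rewrite einvZ tinnerZ Av_v mulr0.
rewrite /tnorm tinnerZ a_conj -expr2 exprVn sqrtCK mulVf ?sqrtC1 //.
by rewrite gt_eqF // tinner_gt0.
Qed.

Lemma tspec0_unitmx A : tspec A 0 <-> mx A \notin unitmx.
Proof.
split=> [[v [v_neq0 Av0]] | /unitmxPn [c Ac0 c_neq0]].
  apply/unitmxPn; exists (cv v); last exact/tnonzero_cv.
  by rewrite -cv_einv Av0 mul0_tvec cv0.
exists (vc c); split; first by apply/tnonzero_cv; rewrite vcK.
by apply: cv_inj; rewrite cv_einv vcK Ac0 mul0_tvec cv0.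
Qed.

Lemma tspec0_tnumrange0 A : tspec A 0 -> tnumrange A 0.
Proof.
move=> [v [v_neq0 Av0]]; apply/tnumrange0P; exists v => //.
by rewrite Av0 mul0_tvec /tinner big1 // => t _; rewrite mulr0.
Qed.

Lemma tnumrange0_left_inverse A X :
  mx X *m mx A = 1%:M -> tnumrange A 0 -> tnumrange X 0.
Proof.
move=> XA1 /tnumrange0P [x x_neq0 Axx0].
have XAx : einv X (einv A x) = x.
  by apply: cv_inj; rewrite !cv_einv mulmxA XA1 mul1mx.
apply/tnumrange0P; exists (einv A x).
  have /tnonzero_cv cvx_neq0 := x_neq0.
  apply/tnonzero_cv; apply: contraNneq cvx_neq0 => Ax0.
  by rewrite -XAx cv_einv Ax0 mulmx0.
by rewrite XAx tinnerC Axx0 conjC0.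
Qed.

Lemma penrose_mulmx_unit A X :
  ein (ein A X) A = A -> mx A \in unitmx -> mx X *m mx A = 1%:M.
Proof.
move=> /(congr1 mx); rewrite !mx_ein -mulmxA => AXA A_unit.
by rewrite -[mx X *m mx A](mulKmx A_unit) AXA mulVmx.
Qed.

Lemma penrose_unitmx A X :
  ein (ein A X) A = A -> ein (ein X A) X = X ->
  (mx A \in unitmx) = (mx X \in unitmx).
Proof.
move=> AXA XAX; apply/idP/idP => [A_unit | X_unit].
  by have := unitmx1 C n; rewrite -(penrose_mulmx_unit AXA A_unit) unitmx_mul => /andP[].
by have := unitmx1 C n; rewrite -(penrose_mulmx_unit XAX X_unit) unitmx_mul => /andP[].
Qed.

Lemma penrose_tspec0 A X :
  ein (ein A X) A = A -> ein (ein X A) X = X -> tspec A 0 <-> tspec X 0.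
Proof. by move=> AXA XAX; rewrite !tspec0_unitmx (penrose_unitmx AXA XAX). Qed.

Lemma penrose_tnumrange0 A X :
  ein (ein A X) A = A -> ein (ein X A) X = X -> tnumrange A 0 -> tnumrange X 0.
Proof.
move=> AXA XAX; case A_unit: (mx A \in unitmx).
  exact/tnumrange0_left_inverse/penrose_mulmx_unit.
move=> _; apply/tspec0_tnumrange0/(penrose_tspec0 AXA XAX).
by rewrite tspec0_unitmx A_unit.
Qed.

End Tensors.

Local Open Scope complex_scope.

Theorem theorem6p1 (R : realType) (N : nat) (I : 'I_N -> nat)
  (A M Nw X : tmat R[i] I) :
  hpd M -> hpd Nw -> is_wmpinv M Nw A X ->
  (tspec A 0 <-> tspec X 0) /\ (tnumrange A 0 <-> tnumrange X 0).
Proof.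
move=> _ _ [AXA XAX _ _]; split; first exact: penrose_tspec0.
by split; apply: penrose_tnumrange0.
Qed.
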